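(* Let $l:\mathbb{R}^p\to\mathbb{R}$ be a convex and differentiable function, let $\lambda_1\ge\lambda_2\ge\dots\ge\lambda_p\ge 0$ be arbitrary, and let $$\hat b\in\operatorname{argmin}_{b\in\mathbb{R}^p}\Big\{l(b)+\sum_{i=1}^p\lambda_i|b|_{(i)}\Big\}.$$ Let $R=\#\{i:\hat b_i\neq 0\}$, $U(b)=-\nabla l(b)$, and for $a>0$ let $T(a)=U(\hat b)+a\hat b$. Then for any $a>0$ and any $r\in\{1,\dots,p\}$, $$R=r \iff T(a)\in H_r.$$
   Context: $|w|_{(1)}\ge\dots\ge|w|_{(p)}$ denote the ordered absolute values of the entries of $w\in\mathbb{R}^p$. For $r\in\{1,\dots,p\}$, $$H_r=\Big\{w\in\mathbb{R}^p:\ \forall_{j\le r}\ \sum_{i=j}^r\lambda_i<\sum_{i=j}^r|w|_{(i)}\ \text{ and }\ \forall_{j\ge r+1}\ \sum_{i=r+1}^j\lambda_i\ge\sum_{i=r+1}^j|w|_{(i)}\Big\}.$$ *)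

From HB Require Import structures.
From mathcomp Require Import all_boot all_order all_algebra.
From mathcomp Require Import all_classical all_reals all_analysis.
Set Implicit Arguments. Unset Strict Implicit. Unset Printing Implicit Defensive.
Import Order.TTheory GRing.Theory Num.Theory.
Import numFieldNormedType.Exports.
Local Open Scope ring_scope.

Section Defs.
Variable R : realType.
Variable p : nat.

(* |w|_(i), 1-based: i-th largest absolute value of the entries of w
   (i in 1..p); the value for i outside 1..p is irrelevant (it is never used). *)
Definition sorted_abs (w : 'rV[R]_p) : seq R :=
  sort (fun x y : R => y <= x) [seq `|w 0 j| | j <- enum 'I_p].
Definition oabs (w : 'rV[R]_p) (i : nat) : R := nth 0 (sorted_abs w) i.-1.

(* lambda_i, 1-based, for lam : 'rV_p *)
Definition lamn (lam : 'rV[R]_p) (i : nat) : R :=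
  nth 0 [seq lam 0 j | j <- enum 'I_p] i.-1.

Definition slope_pen (lam : 'rV[R]_p) (b : 'rV[R]_p) : R :=
  \sum_(1 <= i < p.+1) lamn lam i * oabs b i.

Definition convex_fun (l : 'rV[R]_p -> R) : Prop :=
  forall (x y : 'rV[R]_p) (t : R), 0 <= t <= 1 ->
    l (t *: x + (1 - t) *: y) <= t * l x + (1 - t) * l y.

Definition grad (l : 'rV[R]_p -> R) (b : 'rV[R]_p) : 'rV[R]_p :=
  \row_i ('d l b (delta_mx 0 i : 'rV[R]_p)).

Definition H (lam : 'rV[R]_p) (r : nat) (w : 'rV[R]_p) : Prop :=
  (forall j : nat, (1 <= j <= r)%N ->
     \sum_(j <= i < r.+1) lamn lam i < \sum_(j <= i < r.+1) oabs w i) /\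
  (forall j : nat, (r.+1 <= j <= p)%N ->
     \sum_(r.+1 <= i < j.+1) lamn lam i >= \sum_(r.+1 <= i < j.+1) oabs w i).

End Defs.

From HB Require Import structures.
From mathcomp Require Import all_boot all_order all_algebra.
From mathcomp Require Import all_classical all_reals all_analysis.
From mathcomp Require Import ring lra zify.
Import Order.TTheory GRing.Theory Num.Theory.
Import numFieldNormedType.Exports.
Local Open Scope ring_scope.
Set Implicit Arguments. Unset Strict Implicit. Unset Printing Implicit Defensive.

(* Write S_k(x) for the sum of the k largest |x_j| and L_k = lambda_1 + ... + lambda_k.
   Then T lies in H_r iff L_r - L_m < S_r(T) - S_m(T) for m < r and
   S_n(T) - S_r(T) <= L_n - L_r for r < n <= p.  Summation by parts writes the penalty
   as sum_k (lambda_k - lambda_(k+1)) S_k with nonnegative weights, and each S_k is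
   sublinear, being min_c (k c + sum_j (|x_j| - c)_+).  First-order optimality of bhat
   along well-chosen directions gives, for U = -grad l(bhat) and R = |supp bhat|,
   S_k(U) <= L_k for every k and sum_j U_j sgn(bhat_j) >= L_R.  Hence
   S_k(T) <= L_k + a S_k(bhat) <= L_k + a |bhat|_1, strictly in the second step when
   k < R, while S_R(T) >= L_R + a |bhat|_1: so T lies in H_R.  The sets H_r are
   pairwise disjoint, and when R = 0 the bound S_r(U) <= L_r rules out every H_r. *)

Section TopSum.
Variables (R : realType) (p : nat).
Implicit Types (x y : 'rV[R]_p) (c t : R).

Definition pospart c : R := Num.max c 0.

Lemma pospart_ge0 c : 0 <= pospart c.
Proof. by rewrite le_max lexx orbT. Qed.

Lemma le_pospart c : c <= pospart c.
Proof. by rewrite le_max lexx. Qed.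

Lemma pospart_id c : 0 <= c -> pospart c = c.
Proof. by move=> c_ge0; rewrite /pospart max_l. Qed.

Lemma pospart_eq0 c : c <= 0 -> pospart c = 0.
Proof. by move=> c_le0; rewrite /pospart max_r. Qed.

Lemma pospart_le c d : c <= d -> 0 <= d -> pospart c <= d.
Proof. by move=> cd d_ge0; rewrite ge_max cd d_ge0. Qed.

Lemma mul_le_pospart (f c : R) : 0 <= f <= 1 -> f * c <= pospart c.
Proof.
case/andP=> f_ge0 f_le1; have [c_ge0|c_lt0] := lerP 0 c.
  by rewrite pospart_id // -[leRHS]mul1r ler_wpM2r.
by rewrite pospart_eq0 ?(ltW c_lt0) // mulr_ge0_le0 // ltW.
Qed.

Definition supp x := [set j | x 0 j != 0].

Definition top_sum k x : R := \sum_(i < k) oabs x i.+1.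

Lemma size_sorted_abs x : size (sorted_abs x) = p.
Proof. by rewrite size_sort size_map size_enum_ord. Qed.

Lemma perm_sorted_abs x : perm_eq (sorted_abs x) [seq `|x 0 j| | j <- enum 'I_p].
Proof. by rewrite /sorted_abs perm_sort. Qed.

Lemma sum_oabs x (F : R -> R) : \sum_(i < p) F (oabs x i.+1) = \sum_j F `|x 0 j|.
Proof.
rewrite -[RHS]big_enum /= -(big_map (fun j => `|x 0 j|) xpredT F).
by rewrite -(perm_big _ (perm_sorted_abs x)) (big_nth 0) size_sorted_abs big_mkord.
Qed.

Lemma oabs_ge0 x i : 0 <= oabs x i.
Proof.
rewrite /oabs; have [i_lt|i_ge] := ltnP i.-1 (size (sorted_abs x)); last first.
  by rewrite nth_default.
by move: (mem_nth 0 i_lt); rewrite (perm_mem (perm_sorted_abs x)) => /mapP[j _ ->].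
Qed.

Lemma oabs_le x i i' : (i <= i')%N -> (i' < p)%N -> oabs x i'.+1 <= oabs x i.+1.
Proof.
move=> ii' i'p; have sorted_x : sorted (fun a b : R => b <= a) (sorted_abs x).
  by apply: sort_sorted => a b; exact: le_total.
apply: (sorted_leq_nth _ _ 0 sorted_x) => //; rewrite ?inE ?size_sorted_abs //=.
- by move=> a b c ba cb; exact: le_trans cb ba.
- exact: leq_ltn_trans i'p.
Qed.

Lemma card_abs_count x (P : pred R) :
  #|[set j | P `|x 0 j|]| = count P (sorted_abs x).
Proof.
rewrite (permP (perm_sorted_abs x)).
by rewrite count_map enumT cardsE cardE /enum_mem size_filter.
Qed.

Lemma card_gt_oabs x k : (#|[set j | (oabs x k < `|x 0 j|)%R]| <= k.-1)%N.
Proof.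
rewrite card_abs_count -(cat_take_drop k.-1 (sorted_abs x)) count_cat.
have -> : count (fun v => oabs x k < v) (drop k.-1 (sorted_abs x)) = 0%N.
  apply/eqP; rewrite -leqn0 leqNgt -has_count; apply/hasPn => v.
  case/(nthP 0) => i; rewrite size_drop size_sorted_abs => i_lt <-.
  by rewrite nth_drop /= -leNgt (oabs_le _ (leq_addr i _)) // -ltn_subRL.
rewrite addn0; apply: leq_trans (count_size _ _) _.
by rewrite size_take_min geq_minl.
Qed.

Lemma card_ge_oabs x k : (k <= p)%N -> (k <= #|[set j | (oabs x k <= `|x 0 j|)%R]|)%N.
Proof.
move=> kp; rewrite card_abs_count -(cat_take_drop k (sorted_abs x)) count_cat.
have /eqP -> : count (fun v => oabs x k <= v) (take k (sorted_abs x)) == k.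
  rewrite -[X in _ == X](size_takel (s := sorted_abs x)) ?size_sorted_abs //.
  rewrite -all_count; apply/(all_nthP 0) => i; rewrite size_take_min ltn_min.
  by case/andP=> i_k _; rewrite nth_take //; apply: (oabs_le x (i' := k.-1)); lia.
exact: leq_addr.
Qed.

(* Together with [top_sum_threshold]: [top_sum k x] is the minimum over [c] of
   [k c + sum_j (|x_j| - c)_+], attained at the k-th largest entry. *)
Lemma top_sum_le_threshold k x c : (k <= p)%N ->
  top_sum k x <= k%:R * c + \sum_j pospart (`|x 0 j| - c).
Proof.
move=> kp; rewrite -(sum_oabs x (fun v => pospart (v - c))).
apply: (@le_trans _ _ (\sum_(i < k) (c + pospart (oabs x i.+1 - c)))).
  by apply: ler_sum => i _; rewrite -lerBlDl le_pospart.
rewrite big_split /= sumr_const card_ord mulr_natl lerD2l.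
rewrite (big_ord_widen p (fun i => pospart (oabs x i.+1 - c))) //.
rewrite [leRHS](bigID (fun i : 'I_p => (i < k)%N)) /= lerDl.
by apply: sumr_ge0 => i _; exact: pospart_ge0.
Qed.

(* Also for [k = 0], where [oabs x 0] is the largest entry [oabs x 1]. *)
Lemma top_sum_threshold k x : (k <= p)%N ->
  top_sum k x = k%:R * oabs x k + \sum_j pospart (`|x 0 j| - oabs x k).
Proof.
move=> kp; set c := oabs x k.
rewrite -(sum_oabs x (fun v => pospart (v - c))) (bigID (fun i : 'I_p => (i < k)%N)) /=.
rewrite [X in _ = _ + (_ + X)]big1 => [|i]; last first.
  rewrite -leqNgt => ki; apply: pospart_eq0; rewrite subr_le0.
  exact: (oabs_le x (leq_trans (leq_pred k) ki)).
rewrite addr0 -(big_ord_widen p (fun i => pospart (oabs x i.+1 - c))) //.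
rewrite (eq_bigr (fun i : 'I_k => oabs x i.+1 - c)) => [|i _]; last first.
  apply: pospart_id; rewrite subr_ge0.
  by apply: (oabs_le x (i' := k.-1)); have := ltn_ord i; lia.
by rewrite sumrB sumr_const card_ord mulr_natl addrC subrK.
Qed.

Lemma sum_indicator (P : pred 'I_p) : \sum_j (P j)%:R = #|[set j | P j]|%:R :> R.
Proof.
rewrite cardsE -sum1_card natr_sum [RHS]big_mkcond /=.
by apply: eq_bigr => j _; rewrite unfold_in; case: (P j).
Qed.

Lemma top_sum_ge_weight k x (f : 'I_p -> R) : (k <= p)%N ->
  (forall j, 0 <= f j <= 1) -> \sum_j f j <= k%:R ->
  \sum_j f j * `|x 0 j| <= top_sum k x.
Proof.
move=> kp f01 sum_f; rewrite top_sum_threshold //; set c := oabs x k.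
apply: (@le_trans _ _ (\sum_j (f j * c + pospart (`|x 0 j| - c)))).
  by apply: ler_sum => j _; rewrite -lerBlDl -mulrBr mul_le_pospart.
by rewrite big_split /= -mulr_suml lerD2r ler_wpM2r ?oabs_ge0.
Qed.

Lemma top_sumD k x y : (k <= p)%N -> top_sum k (x + y) <= top_sum k x + top_sum k y.
Proof.
move=> kp; rewrite (top_sum_threshold x kp) (top_sum_threshold y kp).
apply: le_trans (top_sum_le_threshold _ (oabs x k + oabs y k) kp) _.
rewrite addrACA -mulrDr lerD2l -big_split; apply: ler_sum => j _ /=.
apply: pospart_le; last by rewrite addr_ge0 ?pospart_ge0.
have := le_pospart (`|x 0 j| - oabs x k); have := le_pospart (`|y 0 j| - oabs y k).
have := ler_normD (x 0 j) (y 0 j); rewrite mxE; lra.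
Qed.

Lemma top_sumZ k t x : 0 <= t -> (k <= p)%N -> top_sum k (t *: x) <= t * top_sum k x.
Proof.
move=> t_ge0 kp; rewrite (top_sum_threshold x kp).
apply: le_trans (top_sum_le_threshold _ (t * oabs x k) kp) _.
rewrite mulrDr mulr_sumr mulrCA lerD2l; apply: ler_sum => j _.
apply: pospart_le; last by rewrite mulr_ge0 ?pospart_ge0.
by rewrite mxE normrM (ger0_norm t_ge0) -mulrBr ler_wpM2l ?le_pospart.
Qed.

Lemma top_sum_le_norm1 k x : (k <= p)%N -> top_sum k x <= \sum_j `|x 0 j|.
Proof.
move=> kp; apply: le_trans (top_sum_le_threshold x 0 kp) _.
by rewrite mulr0 add0r; apply: ler_sum => j _; rewrite subr0 pospart_id.
Qed.

Lemma top_sum_le_minn n m x : (n <= p)%N ->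
  (forall j, `|x 0 j| <= 1) -> \sum_j `|x 0 j| <= m%:R ->
  top_sum n x <= (minn n m)%:R.
Proof.
move=> np x_le1 x_l1; case: leqP => _.
  apply: le_trans (top_sum_le_threshold x 1 np) _.
  rewrite mulr1 big1 ?addr0 // => j _.
  by rewrite pospart_eq0 // subr_le0.
exact: le_trans (top_sum_le_norm1 x np) x_l1.
Qed.

Lemma card_supp_le x : (#|supp x| <= p)%N.
Proof. by rewrite -[X in (_ <= X)%N]card_ord max_card. Qed.

Lemma sum_abs_supp x : \sum_(j in supp x) `|x 0 j| = \sum_j `|x 0 j|.
Proof.
rewrite big_mkcond; apply: eq_bigr => j _.
by rewrite inE; case: ifPn => // /negPn/eqP ->; rewrite normr0.
Qed.

Lemma sum_supp_le_top_sum k x y : (#|supp x| <= k <= p)%N ->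
  \sum_(j in supp x) `|y 0 j| <= top_sum k y.
Proof.
case/andP=> supp_k kp; pose f j : R := if j \in supp x then 1 else 0.
have -> : \sum_(j in supp x) `|y 0 j| = \sum_j f j * `|y 0 j|.
  by rewrite big_mkcond; apply: eq_bigr => j _; rewrite /f; case: ifP; rewrite ?mul1r ?mul0r.
apply: top_sum_ge_weight => //.
- by move=> j; rewrite /f; case: ifP; rewrite ?lexx ?ler01.
- by rewrite -big_mkcond sumr_const ler_nat.
Qed.

Lemma top_sum_norm1 k x : (#|supp x| <= k <= p)%N -> top_sum k x = \sum_j `|x 0 j|.
Proof.
move=> supp_k; apply/le_anti; rewrite top_sum_le_norm1 ?(proj2 (andP supp_k)) //=.
by rewrite -sum_abs_supp sum_supp_le_top_sum.
Qed.

Lemma sum_mul_sg_le x y :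
  \sum_j y 0 j * Num.sg (x 0 j) <= \sum_(j in supp x) `|y 0 j|.
Proof.
rewrite [leRHS]big_mkcond; apply: ler_sum => j _; rewrite inE.
case: ifPn => [xj|/negPn/eqP ->]; last by rewrite sgr0 mulr0.
by apply: le_trans (ler_norm _) _; rewrite normrM normr_sg xj mulr1.
Qed.

Lemma top_sum_lt_norm1 k x : (k < #|supp x|)%N -> top_sum k x < \sum_j `|x 0 j|.
Proof.
move=> k_supp; have kp : (k < p)%N := leq_trans k_supp (card_supp_le x).
have oabs_gt0 : 0 < oabs x k.+1.
  rewrite lt_def oabs_ge0 andbT; apply/negP => /eqP o0.
  have := card_gt_oabs x k.+1; rewrite o0.
  have -> : [set j | 0 < `|x 0 j|] = supp x by apply/setP => j; rewrite !inE normr_gt0.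
  by rewrite /= leqNgt k_supp.
apply: lt_le_trans (top_sum_le_norm1 x kp).
by rewrite /top_sum big_ord_recr /= ltrDl.
Qed.

Lemma top_sum_shrink n x t : (n <= p)%N -> 0 <= t ->
  (forall j, x 0 j != 0 -> t <= `|x 0 j|) ->
  top_sum n (x - t *: map_mx Num.sg x) <= top_sum n x - t * (minn n #|supp x|)%:R.
Proof.
move=> np t_ge0 t_le; set y := x - _.
have abs_y j : `|y 0 j| = if x 0 j != 0 then `|x 0 j| - t else 0.
  rewrite !mxE; case: ifPn => [xj|/negPn/eqP ->]; last by rewrite sgr0 mulr0 subr0 normr0.
  rewrite {1}(numEsg (x 0 j)) (mulrC t) -mulrBr normrM normr_sg xj mul1r.
  by rewrite ger0_norm // subr_ge0 t_le.
have [supp_n|n_supp] := leqP #|supp x| n.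
  rewrite (top_sum_norm1 (x := x)) ?supp_n //.
  apply: le_trans (top_sum_le_norm1 _ np) _.
  have -> : \sum_j `|y 0 j| = \sum_(j in supp x) (`|x 0 j| - t).
    by rewrite [RHS]big_mkcond; apply: eq_bigr => j _; rewrite abs_y inE.
  by rewrite sumrB sum_abs_supp sumr_const mulr_natr.
set c := oabs x n.
have t_c : t <= c.
  rewrite leNgt; apply/negP => c_t.
  have /subset_leq_card : supp x \subset [set j | c < `|x 0 j|].
    by apply/fintype.subsetP => j; rewrite !inE => xj; exact: lt_le_trans c_t (t_le j xj).
  by move: (card_gt_oabs x n) n_supp; rewrite -/c; lia.
apply: le_trans (top_sum_le_threshold y (c - t) np) _.
rewrite (top_sum_threshold x np) -/c.
have -> : \sum_j pospart (`|y 0 j| - (c - t)) = \sum_j pospart (`|x 0 j| - c).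
  apply: eq_bigr => j _; rewrite abs_y; case: ifPn => [_|/negPn/eqP ->].
    by congr pospart; lra.
  by have := oabs_ge0 x n; rewrite normr0 !pospart_eq0 //; lra.
lra.
Qed.

Lemma top_sum_attained k x : (0 < k <= p)%N -> exists f : 'I_p -> R,
  [/\ forall j, 0 <= f j <= 1, \sum_j f j = k%:R & \sum_j f j * `|x 0 j| = top_sum k x].
Proof.
case/andP=> k_gt0 kp; set c := oabs x k.
set G : R := #|[set j | c < `|x 0 j|]|%:R.
set E : R := #|[set j | `|x 0 j| == c]|%:R.
have G_lt : G < k%:R by rewrite /G ltr_nat; move: (card_gt_oabs x k); rewrite -/c; lia.
have GE : k%:R <= G + E.
  apply: le_trans (_ : #|[set j | c <= `|x 0 j|]|%:R <= _); first by rewrite ler_nat card_ge_oabs.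
  rewrite /G /E -!sum_indicator -big_split; apply: ler_sum => j _ /=.
  by case: ltgtP; rewrite ?mulr1n ?mulr0n ?addr0 ?add0r.
(* Full weight above the threshold [c], and the ties share the remaining [k - G]. *)
set th := (k%:R - G) / E.
have E_gt0 : 0 < E by lra.
have th01 : 0 <= th <= 1.
  by rewrite divr_ge0 ?ler_pdivrMr ?mul1r /=; lra.
pose f j := if c < `|x 0 j| then 1 else if `|x 0 j| == c then th else 0.
have sum_f : \sum_j f j = k%:R.
  transitivity (G + th * E); last by rewrite divfK ?gt_eqF //; lra.
  rewrite /G /E -!sum_indicator mulr_sumr -big_split; apply: eq_bigr => j _ /=.
  by rewrite /f; case: ltgtP; rewrite ?mulr0 ?mulr1 ?addr0 ?add0r.
exists f; split => //.
  by move=> j; rewrite /f; case: ifP; rewrite ?lexx ?ler01 //; case: ifP; rewrite ?lexx ?ler01.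
rewrite top_sum_threshold // -/c -sum_f mulr_suml -big_split; apply: eq_bigr => j _ /=.
rewrite /f; case: ltgtP => [c_x|x_c|->]; last by rewrite subrr pospart_eq0 // addr0.
- by rewrite pospart_id ?subr_ge0 ?ltW //; lra.
- by rewrite pospart_eq0 ?subr_le0 ?ltW //; lra.
Qed.

End TopSum.

Lemma sum_by_parts (R : comPzRingType) (F o : nat -> R) n :
  \sum_(i < n) F i * o i =
  \sum_(i < n) (F i - F i.+1) * \sum_(i' < i.+1) o i' + F n * \sum_(i < n) o i.
Proof.
elim: n => [|n IHn]; first by rewrite !big_ord0 mulr0 addr0.
by rewrite big_ord_recr /= IHn big_ord_recr /= [in RHS]big_ord_recr /=; ring.
Qed.

Section SlopePenalty.
Variables (R : realType) (p : nat) (lam : 'rV[R]_p).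

Definition lam_sum k : R := \sum_(i < k) lamn lam i.+1.

Lemma lamn_ord (i : 'I_p) : lamn lam i.+1 = lam 0 i.
Proof. by rewrite /lamn /= (nth_map i 0) ?size_enum_ord ?ltn_ord // nth_ord_enum. Qed.

Lemma lamn_out : lamn lam p.+1 = 0.
Proof. by rewrite /lamn nth_default // size_map size_enum_ord. Qed.

Lemma slope_pen_by_parts x : slope_pen lam x =
  \sum_(i < p) (lamn lam i.+1 - lamn lam i.+2) * top_sum i.+1 x.
Proof.
rewrite /slope_pen big_add1 /= big_mkord.
by rewrite (sum_by_parts (fun i => lamn lam i.+1) (fun i => oabs x i.+1)) lamn_out mul0r addr0.
Qed.

Lemma lam_sum_by_parts k : (k <= p)%N ->
  \sum_(i < p) (lamn lam i.+1 - lamn lam i.+2) * (minn i.+1 k)%:R = lam_sum k.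
Proof.
move=> kp; have minn_sum n : (minn n k)%:R = \sum_(i < n) ((i < k)%N)%:R :> R.
  elim: n => [|n IHn]; first by rewrite big_ord0 min0n.
  rewrite big_ord_recr /= -IHn; case: ltnP => nk.
    by rewrite (minn_idPl nk) mulr1n natr1.
  by rewrite (minn_idPr (leq_trans nk (leqnSn n))) mulr0n addr0.
under eq_bigr => i _ do rewrite minn_sum.
have := sum_by_parts (fun i => lamn lam i.+1) (fun i => ((i < k)%N)%:R) p.
rewrite lamn_out mul0r addr0 => <-.
rewrite /lam_sum (big_ord_widen p (fun i => lamn lam i.+1)) // [RHS]big_mkcond.
by apply: eq_bigr => i _; case: ltnP; rewrite ?mulr1 ?mulr0.
Qed.

Hypothesis lam_noninc : forall i j : 'I_p, (i <= j)%N -> lam 0 j <= lam 0 i.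
Hypothesis lam_ge0 : forall i : 'I_p, 0 <= lam 0 i.

Lemma lamn_step_ge0 i : (i < p)%N -> 0 <= lamn lam i.+1 - lamn lam i.+2.
Proof.
move=> ip; rewrite subr_ge0 (lamn_ord (Ordinal ip)).
have [ip'|] := ltnP i.+1 p; first by rewrite (lamn_ord (Ordinal ip')) lam_noninc /=.
move=> pi; have -> : i.+2 = p.+1 by lia.
by rewrite lamn_out.
Qed.

Lemma slope_pen_le_lam_sum x y c k : (k <= p)%N ->
  (forall n, (0 < n <= p)%N -> top_sum n x <= top_sum n y + c * (minn n k)%:R) ->
  slope_pen lam x <= slope_pen lam y + c * lam_sum k.
Proof.
move=> kp top_le; rewrite !slope_pen_by_parts -(lam_sum_by_parts kp).
rewrite mulr_sumr -big_split; apply: ler_sum => i _ /=.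
rewrite mulrCA -mulrDr ler_wpM2l ?lamn_step_ge0 //.
by apply: top_le; rewrite /= ltn_ord.
Qed.

End SlopePenalty.

Lemma le_diff_of_increments (R : realType) (V : normedModType R) (f : V -> R)
    (b w : V) (K t0 : R) :
  differentiable f b -> 0 < t0 ->
  (forall t, 0 < t -> t <= t0 -> t * K <= f (b + t *: w) - f b) ->
  K <= 'd f b w.
Proof.
move=> f_diff t0_gt0 incr; rewrite -deriveE //.
have f_der := @diff_derivable _ _ _ f b w f_diff.
rewrite /derive (cvg_at_rightE _ _ f_der).
apply: limr_ge; first exact: (cvgP _ (cvg_dnbhs_at_right f_der)).
near=> h.
have h_gt0 : 0 < h by near: h; exact: nbhs_right_gt.
have h_le : h <= t0 by near: h; exact: nbhs_right_le.
have hV_gt0 : 0 < h^-1 by rewrite invr_gt0.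
have := incr h h_gt0 h_le.
rewrite -(ler_pM2l hV_gt0) mulrA mulVf ?gt_eqF // mul1r (addrC b).
by move=> /le_trans; apply.
Unshelve. all: by end_near.
Qed.

Lemma diff_grad (R : realType) p (l : 'rV[R]_p -> R) (b w : 'rV[R]_p) :
  'd l b w = \sum_j grad l b 0 j * w 0 j.
Proof.
rewrite {1}(row_sum_delta w) linear_sum; apply: eq_bigr => j _.
by rewrite linearZ /= /grad mxE mulrC.
Qed.

Lemma sum_nat_shift (R : zmodType) (f : nat -> R) j n : (0 < j <= n.+1)%N ->
  \sum_(j <= i < n.+1) f i = \sum_(i < n) f i.+1 - \sum_(i < j.-1) f i.+1.
Proof.
case: j => [//|j] /= jn; rewrite big_add1 /= -!(big_mkord xpredT (fun i => f i.+1)).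
by rewrite [X in _ = X - _](@big_cat_nat _ _ _ j) //= addrAC subrr add0r.
Qed.

Section SetH.
Variables (R : realType) (p : nat) (lam : 'rV[R]_p).

Lemma H_top_sum r w : H lam r w <->
  (forall m, (m < r)%N -> lam_sum lam r - lam_sum lam m < top_sum r w - top_sum m w) /\
  (forall n, (r < n <= p)%N -> top_sum n w - top_sum r w <= lam_sum lam n - lam_sum lam r).
Proof.
rewrite /H; split=> -[Hlt Hge]; split.
- by move=> m mr; have := Hlt m.+1 mr; rewrite !sum_nat_shift ?ltnS ?(ltnW mr).
- move=> n rnp; have := Hge n rnp; case/andP: rnp => rn _.
  by rewrite !sum_nat_shift ?ltnS ?(ltnW rn).
- move=> j /andP[j_gt0 jr]; rewrite !sum_nat_shift ?j_gt0 ?(leqW jr) //.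
  by apply: Hlt; rewrite prednK.
- move=> n /andP[rn np]; rewrite !sum_nat_shift ?ltnS ?(ltnW rn) //.
  by apply: Hge; rewrite rn np.
Qed.

Lemma H_unique r s w : (r <= p)%N -> (s <= p)%N -> H lam r w -> H lam s w -> r = s.
Proof.
wlog rs : r s / (r <= s)%N => [wlog_rs|rp sp].
  by case/orP: (leq_total r s) => ? ? ? ? ?; [|symmetry]; apply: wlog_rs.
move=> /H_top_sum[_ Hr] /H_top_sum[Hs _]; apply/eqP; rewrite eqn_leq rs leqNgt.
apply/negP => sr; have := Hs r sr; have := Hr s; rewrite sr sp => /(_ isT); lra.
Qed.

End SetH.

Section FirstOrderConditions.
Variables (R : realType) (p : nat) (l : 'rV[R]_p -> R) (lam b : 'rV[R]_p).
Hypothesis l_diff : forall x, differentiable l x.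
Hypothesis lam_noninc : forall i j : 'I_p, (i <= j)%N -> lam 0 j <= lam 0 i.
Hypothesis lam_ge0 : forall i : 'I_p, 0 <= lam 0 i.
Hypothesis b_opt : forall x, l b + slope_pen lam b <= l x + slope_pen lam x.

Local Notation U := (- grad l b).

Lemma opt_inner_le w c k t0 : 0 < t0 -> (k <= p)%N ->
  (forall t, 0 < t -> t <= t0 -> forall n, (0 < n <= p)%N ->
     top_sum n (b + t *: w) <= top_sum n b + t * c * (minn n k)%:R) ->
  \sum_j U 0 j * w 0 j <= c * lam_sum lam k.
Proof.
move=> t0_gt0 kp top_le.
have grad_ge : - (c * lam_sum lam k) <= \sum_j grad l b 0 j * w 0 j.
  rewrite -diff_grad; apply: (le_diff_of_increments (l_diff b) t0_gt0) => t t_gt0 t_le.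
  have := b_opt (b + t *: w).
  have := slope_pen_le_lam_sum lam_noninc lam_ge0 kp (top_le t t_gt0 t_le).
  lra.
have -> : \sum_j U 0 j * w 0 j = - \sum_j grad l b 0 j * w 0 j.
  by rewrite -sumrN; apply: eq_bigr => j _; rewrite mxE mulNr.
lra.
Qed.

Lemma top_sum_grad_le k : (k <= p)%N -> top_sum k U <= lam_sum lam k.
Proof.
case: k => [|k] kp; first by rewrite /top_sum /lam_sum !big_ord0.
set u := U; have [f [f01 sum_f sum_fu]] := top_sum_attained u (k := k.+1) kp.
pose w : 'rV[R]_p := \row_j (Num.sg (u 0 j) * f j).
have abs_w j : `|w 0 j| <= f j.
  rewrite mxE normrM normr_sg (ger0_norm (proj1 (andP (f01 j)))).
  by case: (_ != 0); rewrite ?mul1r ?mul0r //; case/andP: (f01 j).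
rewrite -[lam_sum _ _]mul1r -sum_fu.
have -> : \sum_j f j * `|u 0 j| = \sum_j u 0 j * w 0 j.
  by apply: eq_bigr => j _; rewrite [w 0 j]mxE mulrA (mulrC (u 0 j)) -normrEsg mulrC.
apply: (opt_inner_le ltr01) => // t t_gt0 _ n /andP[_ np].
apply: le_trans (top_sumD _ _ np) _; rewrite mulr1 lerD2l.
apply: le_trans (top_sumZ w (ltW t_gt0) np) _; rewrite ler_pM2l //.
apply: top_sum_le_minn => // [j|]; first by apply: le_trans (abs_w j) _; case/andP: (f01 j).
by rewrite -sum_f; apply: ler_sum => j _.
Qed.

Lemma lam_sum_le_sg : lam_sum lam #|supp b| <= \sum_j U 0 j * Num.sg (b 0 j).
Proof.
(* The seed [1] keeps [mu] positive when [b = 0]. *)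
pose mu := \big[Num.min/1]_(j | b 0 j != 0) `|b 0 j|.
have mu_gt0 : 0 < mu by apply/bigmin_gtP; split=> // j; rewrite normr_gt0.
have mu_le j : b 0 j != 0 -> mu <= `|b 0 j| by move=> bj; exact: bigmin_le_cond.
set w : 'rV[R]_p := - map_mx Num.sg b.
have -> : \sum_j U 0 j * Num.sg (b 0 j) = - \sum_j U 0 j * w 0 j.
  by rewrite -sumrN; apply: eq_bigr => j _; rewrite !mxE mulrN opprK.
rewrite lerNr -mulN1r.
apply: (opt_inner_le mu_gt0 (card_supp_le b)) => t t_gt0 t_le n /andP[_ np].
rewrite /w scalerN mulrN1 mulNr.
by apply: top_sum_shrink => // [|j bj]; [exact: ltW | exact: le_trans t_le (mu_le j bj)].
Qed.

Lemma H_card_supp a : 0 < a -> (0 < #|supp b|)%N -> H lam #|supp b| (U + a *: b).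
Proof.
move=> a_gt0 supp_gt0; set r := #|supp b|; set T := U + a *: b.
have rp : (r <= p)%N := card_supp_le b.
have T_ge : lam_sum lam r + a * \sum_j `|b 0 j| <= top_sum r T.
  have T_supp : \sum_(j in supp b) `|T 0 j| <= top_sum r T.
    by apply: sum_supp_le_top_sum; rewrite leqnn rp.
  apply: le_trans (le_trans (sum_mul_sg_le b T) T_supp).
  have -> : \sum_j T 0 j * Num.sg (b 0 j) =
            \sum_j U 0 j * Num.sg (b 0 j) + a * \sum_j `|b 0 j|.
    rewrite mulr_sumr -big_split; apply: eq_bigr => j _ /=.
    by rewrite /T !mxE mulrDl -mulrA (mulrC (b 0 j)) -normrEsg.
  by rewrite lerD2r lam_sum_le_sg.
have T_le k : (k <= p)%N -> top_sum k T <= lam_sum lam k + a * top_sum k b.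
  move=> kp; apply: le_trans (top_sumD _ _ kp) _.
  by rewrite lerD ?top_sum_grad_le ?top_sumZ ?ltW.
apply/H_top_sum; split=> [m mr|n /andP[rn np]].
  have := T_le m (leq_trans (ltnW mr) rp).
  have : a * top_sum m b < a * \sum_j `|b 0 j| by rewrite ltr_pM2l // top_sum_lt_norm1.
  lra.
have := T_le n np.
have : a * top_sum n b <= a * \sum_j `|b 0 j| by rewrite ler_pM2l // top_sum_le_norm1.
lra.
Qed.

Lemma notH_supp0 a r : #|supp b| = 0%N -> (0 < r <= p)%N -> ~ H lam r (U + a *: b).
Proof.
move=> supp0 /andP[r_gt0 rp] /H_top_sum[Hlt _].
have b0 : b = 0.
  apply/rowP => j; rewrite mxE; apply/eqP; apply: contraT => bj.
  by move: (cards0_eq supp0) => /setP /(_ j); rewrite !inE bj.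
have := Hlt 0%N r_gt0; have := top_sum_grad_le rp.
rewrite b0 scaler0 addr0 [top_sum 0 _]big_ord0 [lam_sum _ 0]big_ord0; lra.
Qed.

Lemma card_supp_iff a r : 0 < a -> (0 < r <= p)%N ->
  #|supp b| = r <-> H lam r (U + a *: b).
Proof.
move=> a_gt0 r_range; split=> [supp_r|Hr].
  by rewrite -supp_r; apply: H_card_supp; rewrite // supp_r; case/andP: r_range.
have [supp0|supp_gt0] := posnP #|supp b|; first by case: (notH_supp0 supp0 r_range Hr).
apply: H_unique (card_supp_le b) _ (H_card_supp a_gt0 supp_gt0) Hr.
by case/andP: r_range.
Qed.

End FirstOrderConditions.

Theorem theorem2 (R : realType) (p : nat) (l : 'rV[R]_p -> R)
  (lam : 'rV[R]_p) (bhat : 'rV[R]_p) :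
  convex_fun l ->
  (forall b : 'rV[R]_p, differentiable l b) ->
  (forall i j : 'I_p, (i <= j)%N -> lam 0 j <= lam 0 i) ->
  (forall i : 'I_p, 0 <= lam 0 i) ->
  (forall b : 'rV[R]_p, l bhat + slope_pen lam bhat <= l b + slope_pen lam b) ->
  forall a : R, 0 < a ->
  forall r : nat, (1 <= r <= p)%N ->
    (#|[set i : 'I_p | bhat 0 i != 0]| = r <->
     H lam r (- grad l bhat + a *: bhat)).
Proof.
move=> _ l_diff lam_noninc lam_ge0 bhat_opt a a_gt0 r r_range.
exact: card_supp_iff.
Qed.
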